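(* Let $(G,\mathcal F_\bullet G,\mathfrak R)$ be a filtered Rota–Baxter group such that $\mathsf{gr}\,G$ has a structure of a $\mathbb Q$-Lie algebra (i.e. each $\mathsf{gr}_nG$ is a uniquely divisible abelian group, with $\mathbb Q$-action determined by $m\cdot\bar x=\overline{x^m}$). Then the map $\mathsf{gr}\,\mathfrak R:\mathsf{gr}\,G\to\mathsf{gr}\,G$ is $\mathbb Q$-linear and $(\mathsf{gr}\,G,\mathsf{gr}\,\mathfrak R)$ is a graded Rota–Baxter $\mathbb Q$-Lie algebra.
   Context: For a group $G$ write $(x,y)=xyx^{-1}y^{-1}$. A filtered group is a group with subgroups $G=\mathcal F_1G\supset\mathcal F_2G\supset\cdots$ such that the subgroup generated by commutators $(x,y)$, $x\in\mathcal F_nG$, $y\in\mathcal F_mG$, lies in $\mathcal F_{n+m}G$. Then $\mathsf{gr}_nG=\mathcal F_nG/\mathcal F_{n+1}G$ is abelian, written additively ($\bar x+\bar y=\overline{xy}$), and $\mathsf{gr}\,G=\bigoplus_{n\ge1}\mathsf{gr}_nG$ is a graded Lie ring with bracket determined by $[\bar x,\bar y]=\overline{(x,y)}\in\mathsf{gr}_{n+m}G$ for $x\in\mathcal F_nG,y\in\mathcal F_mG$. A filtered Rota–Baxter group is a filtered group with a map $\mathfrak R$ satisfying $\mathfrak R(g)\mathfrak R(h)=\mathfrak R(g\mathfrak R(g)h\mathfrak R(g)^{-1})$ and $\mathfrak R(\mathcal F_nG)\subset\mathcal F_nG$. $\mathsf{gr}\,\mathfrak R$ is the additive map acting on $\mathsf{gr}_nG$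 by $\bar x\mapsto\overline{\mathfrak R(x)}$ (well defined). A graded Rota–Baxter ($\mathbb Q$-)Lie algebra is a graded Lie algebra with a linear map $P$ preserving each graded component and satisfying $[P(a),P(b)]=P([P(a),b]+[a,P(b)]+[a,b])$. *)

From Stdlib Require Import Arith ZArith.

Section GroupDefs.
Context {G : Type} (mul : G -> G -> G) (inv : G -> G) (e : G).

Record is_group : Prop := {
  grp_assoc : forall x y z, mul x (mul y z) = mul (mul x y) z;
  grp_left_id : forall x, mul e x = x;
  grp_left_inv : forall x, mul (inv x) x = e
}.

Definition comm (x y : G) : G := mul (mul (mul x y) (inv x)) (inv y).

Fixpoint gpow (x : G) (n : nat) : G :=
  match n with O => e | S k => mul x (gpow x k) end.

Definition zpow (x : G) (z : Z) : G :=
  match z with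
  | Z0 => e
  | Zpos p => gpow x (Pos.to_nat p)
  | Zneg p => inv (gpow x (Pos.to_nat p))
  end.

Definition is_subgroup (H : G -> Prop) : Prop :=
  H e /\ (forall x y, H x -> H y -> H (mul x y)) /\ (forall x, H x -> H (inv x)).

(* A filtration G = F_1 ⊇ F_2 ⊇ ... by subgroups with (F_n, F_m) ⊆ F_(n+m).
   Only the indices n >= 1 are meaningful; F 0 is ignored. *)
Record is_filtration (F : nat -> G -> Prop) : Prop := {
  filt_one : forall x, F 1 x;
  filt_subgroup : forall n, 1 <= n -> is_subgroup (F n);
  filt_decr : forall n x, 1 <= n -> F (S n) x -> F n x;
  filt_comm : forall n m x y, 1 <= n -> 1 <= m -> F n x -> F m y ->
                F (n + m) (comm x y)
}.

Record is_filtered_RB (F : nat -> G -> Prop) (R : G -> G) : Prop := {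
  rb_identity : forall g h,
    mul (R g) (R h) = R (mul (mul (mul g (R g)) h) (inv (R g)));
  rb_filt : forall n x, 1 <= n -> F n x -> F n (R x)
}.

(* Equality in gr_n G = F_n / F_(n+1) of the classes of x, y ∈ F_n. *)
Definition gr_eq (F : nat -> G -> Prop) (n : nat) (x y : G) : Prop :=
  F (S n) (mul (inv y) x).

(* Each gr_n G (n >= 1) is uniquely divisible: multiplication by every
   m >= 1, x̄ ↦ m·x̄ = overline{x^m}, is a bijection of gr_n G. *)
Definition gr_uniquely_divisible (F : nat -> G -> Prop) : Prop :=
  forall n m, 1 <= n -> 1 <= m ->
    (forall x, F n x -> exists y, F n y /\ gr_eq F n (gpow y m) x) /\
    (forall y1 y2, F n y1 -> F n y2 ->
       gr_eq F n (gpow y1 m) (gpow y2 m) -> gr_eq F n y1 y2).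

Definition grR_well_defined (F : nat -> G -> Prop) (R : G -> G) : Prop :=
  forall n x y, 1 <= n -> F n x -> F n y -> gr_eq F n x y -> gr_eq F n (R x) (R y).

Definition grR_additive (F : nat -> G -> Prop) (R : G -> G) : Prop :=
  forall n x y, 1 <= n -> F n x -> F n y ->
    gr_eq F n (R (mul x y)) (mul (R x) (R y)).

(* gr R commutes with the Q-action: for q = a/b (b >= 1), q·x̄ is the unique
   ȳ with b·ȳ = a·x̄ (where k·x̄ = overline{x^k}, k ∈ Z); so Q-homogeneity
   reads: b·ȳ = a·x̄  ⇒  b·(gr R)ȳ = a·(gr R)x̄. *)
Definition grR_Q_homogeneous (F : nat -> G -> Prop) (R : G -> G) : Prop :=
  forall n (a : Z) (b : positive) x y, 1 <= n -> F n x -> F n y ->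
    gr_eq F n (zpow y (Zpos b)) (zpow x a) ->
    gr_eq F n (zpow (R y) (Zpos b)) (zpow (R x) a).

(* Rota–Baxter identity in gr G for homogeneous x̄ ∈ gr_n, ȳ ∈ gr_m:
   [P x̄, P ȳ] = P([P x̄, ȳ] + [x̄, P ȳ] + [x̄, ȳ]) in gr_(n+m). *)
Definition grR_RB_identity (F : nat -> G -> Prop) (R : G -> G) : Prop :=
  forall n m x y, 1 <= n -> 1 <= m -> F n x -> F m y ->
    gr_eq F (n + m) (comm (R x) (R y))
      (R (mul (mul (comm (R x) y) (comm x (R y))) (comm x y))).

End GroupDefs.

From Stdlib Require Import Arith ZArith Lia Setoid Morphisms.

(* The Rota–Baxter identity says that R is a homomorphism from the derived
   group (G, ∘), g ∘ h = g R(g) h R(g)⁻¹, to G.  Modulo F_(n+1), conjugation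
   by and commutators with arbitrary elements act trivially on F_n, so for
   x, y ∈ F_n the derived product x ∘ y agrees with xy: gr R is well defined
   and additive, hence Z- and Q-linear.  Likewise [R x, R y] is the image
   under R of the derived commutator, which equals [x R x, y R y] [R x, R y]⁻¹;
   expanding this bilinearly modulo F_(n+m+1) yields the graded Rota–Baxter
   identity. *)

Section Group.

Context {G : Type} {mul : G -> G -> G} {inv : G -> G} {e : G}.
Hypothesis HG : is_group mul inv e.

Local Infix "⋅" := mul (at level 40, left associativity).
Local Notation "x ⁻¹" := (inv x) (at level 3, format "x ⁻¹").
Local Notation "⁅ x , y ⁆" := (comm mul inv x y).

Lemma mulgA x y z : x ⋅ (y ⋅ z) = x ⋅ y ⋅ z.
Proof. apply (grp_assoc _ _ _ HG). Qed.

Lemma mul1g x : e ⋅ x = x.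
Proof. apply (grp_left_id _ _ _ HG). Qed.

Lemma mulVg x : x⁻¹ ⋅ x = e.
Proof. apply (grp_left_inv _ _ _ HG). Qed.

Lemma mulKg x y : x⁻¹ ⋅ (x ⋅ y) = y.
Proof. now rewrite mulgA, mulVg, mul1g. Qed.

Lemma mulgV x : x ⋅ x⁻¹ = e.
Proof. now rewrite <- (mulKg x⁻¹ (x ⋅ x⁻¹)), (mulKg x x⁻¹), mulVg. Qed.

Lemma mulKVg x y : x ⋅ (x⁻¹ ⋅ y) = y.
Proof. now rewrite mulgA, mulgV, mul1g. Qed.

Lemma mulg1 x : x ⋅ e = x.
Proof. now rewrite <- (mulVg x), mulgA, mulgV, mul1g. Qed.

Lemma mulgK x y : y ⋅ x ⋅ x⁻¹ = y.
Proof. now rewrite <- mulgA, mulgV, mulg1. Qed.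

Lemma inv_unique x y : x ⋅ y = e -> y = x⁻¹.
Proof. intros Hxy. now rewrite <- (mulKg x y), Hxy, mulg1. Qed.

Lemma invgK x : x⁻¹⁻¹ = x.
Proof. symmetry. apply inv_unique, mulVg. Qed.

Lemma invg1 : e⁻¹ = e.
Proof. symmetry. apply inv_unique, mul1g. Qed.

Lemma invMg x y : (x ⋅ y)⁻¹ = y⁻¹ ⋅ x⁻¹.
Proof. symmetry. apply inv_unique. now rewrite <- mulgA, mulKVg, mulgV. Qed.

Ltac group_simpl :=
  unfold comm;
  repeat first
    [ rewrite <- mulgA | rewrite invMg | rewrite invgK | rewrite invg1
    | rewrite mul1g | rewrite mulg1 | rewrite mulKg | rewrite mulKVg
    | rewrite mulVg | rewrite mulgV ];
  reflexivity.

Section RotaBaxter.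

Context {R : G -> G}.
Hypothesis R_mul : forall g h, R g ⋅ R h = R (g ⋅ R g ⋅ h ⋅ (R g)⁻¹).

Lemma R_one : R e = e.
Proof.
  assert (Hee : R e ⋅ R e = R e) by (rewrite R_mul; f_equal; group_simpl).
  now rewrite <- (mulKg (R e) (R e)), Hee, mulVg.
Qed.

Lemma R_ldiv x y : (R y)⁻¹ ⋅ R x = R ((R y)⁻¹ ⋅ (y⁻¹ ⋅ x) ⋅ R y).
Proof.
  rewrite <- (mulKg (R y) (R ((R y)⁻¹ ⋅ (y⁻¹ ⋅ x) ⋅ R y))), R_mul.
  do 3 f_equal. group_simpl.
Qed.

Lemma R_mul_comm x y : R x ⋅ R y = R (x ⋅ y ⋅ ⁅y⁻¹, R x⁆).
Proof. rewrite R_mul. f_equal. group_simpl. Qed.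

Lemma R_derived_inv g : R ((R g)⁻¹ ⋅ g⁻¹ ⋅ R g) = (R g)⁻¹.
Proof.
  apply inv_unique. rewrite R_mul, <- R_one. f_equal. group_simpl.
Qed.

(* [R x, R y] = R (((x ∘ y) ∘ x') ∘ y'), where x' = (R x)⁻¹ x⁻¹ R x is the
   ∘-inverse of x; p, q, r below are the successive partial products. *)
Lemma R_comm x y :
  ⁅R x, R y⁆ = R (⁅x ⋅ R x, y ⋅ R y⁆ ⋅ ⁅R x, R y⁆⁻¹).
Proof.
  set (p := x ⋅ R x ⋅ y ⋅ (R x)⁻¹).
  assert (Rp : R p = R x ⋅ R y) by (symmetry; apply R_mul).
  set (q := p ⋅ R p ⋅ ((R x)⁻¹ ⋅ x⁻¹ ⋅ R x) ⋅ (R p)⁻¹).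
  assert (Rq : R q = R x ⋅ R y ⋅ (R x)⁻¹)
    by (unfold q; now rewrite <- R_mul, Rp, R_derived_inv).
  set (r := q ⋅ R q ⋅ ((R y)⁻¹ ⋅ y⁻¹ ⋅ R y) ⋅ (R q)⁻¹).
  assert (Rr : R r = ⁅R x, R y⁆)
    by (unfold r; now rewrite <- R_mul, Rq, R_derived_inv).
  rewrite <- Rr at 1. f_equal. unfold r. rewrite Rq. unfold q. rewrite Rp. unfold p.
  group_simpl.
Qed.

End RotaBaxter.

Section Filtration.

Context {F : nat -> G -> Prop}.
Hypothesis HF : is_filtration mul inv e F.

Local Notation "x ≡[ n ] y" := (gr_eq mul inv F n x y)
  (at level 70, format "x  ≡[ n ]  y").

Lemma filt1 k : 1 <= k -> F k e.
Proof. intros Hk. apply (filt_subgroup _ _ _ _ HF k Hk). Qed.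

Lemma filtM k x y : 1 <= k -> F k x -> F k y -> F k (x ⋅ y).
Proof. intros Hk. apply (filt_subgroup _ _ _ _ HF k Hk). Qed.

Lemma filtV k x : 1 <= k -> F k x -> F k x⁻¹.
Proof. intros Hk. apply (filt_subgroup _ _ _ _ HF k Hk). Qed.

Lemma filt_antitone j k x : 1 <= j -> j <= k -> F k x -> F j x.
Proof.
  intros Hj Hjk. induction Hjk as [|k Hjk IH]; auto.
  intros Hx. apply IH, (filt_decr _ _ _ _ HF); [lia | exact Hx].
Qed.

Lemma filt_commg n m x y : 1 <= n -> 1 <= m -> F n x -> F m y -> F (n + m) ⁅x, y⁆.
Proof. apply (filt_comm _ _ _ _ HF). Qed.

Lemma filt_conj k g f : 1 <= k -> F k f -> F k (g⁻¹ ⋅ f ⋅ g).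
Proof.
  intros Hk Hf.
  replace (g⁻¹ ⋅ f ⋅ g) with (⁅g⁻¹, f⁆ ⋅ f) by group_simpl.
  apply filtM; auto.
  apply (filt_antitone k (1 + k)); [lia | lia |].
  apply filt_commg; [lia | exact Hk | apply (filt_one _ _ _ _ HF) | exact Hf].
Qed.

Lemma filt_gpow k x n : 1 <= k -> F k x -> F k (gpow mul e x n).
Proof.
  intros Hk Hx. induction n as [|n IH]; simpl; [apply filt1 | apply filtM]; auto.
Qed.

#[local] Instance gr_eq_Equivalence n : Equivalence (gr_eq mul inv F n).
Proof.
  unfold gr_eq. split.
  - intros x. rewrite mulVg. apply filt1. lia.
  - intros x y Hxy. apply (filtV (S n)) in Hxy; [|lia].
    now rewrite invMg, invgK in Hxy.
  - intros x y z Hxy Hyz.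
    replace (z⁻¹ ⋅ x) with (z⁻¹ ⋅ y ⋅ (y⁻¹ ⋅ x)) by group_simpl.
    apply filtM; auto. lia.
Qed.

#[local] Instance mul_gr_eq_Proper n :
  Proper (gr_eq mul inv F n ==> gr_eq mul inv F n ==> gr_eq mul inv F n) mul.
Proof.
  unfold gr_eq. intros x x' Hx y y' Hy.
  replace ((x' ⋅ y')⁻¹ ⋅ (x ⋅ y)) with (y'⁻¹ ⋅ y ⋅ (y⁻¹ ⋅ (x'⁻¹ ⋅ x) ⋅ y))
    by group_simpl.
  apply filtM; [lia | exact Hy |]. apply filt_conj; [lia | exact Hx].
Qed.

#[local] Instance inv_gr_eq_Proper n :
  Proper (gr_eq mul inv F n ==> gr_eq mul inv F n) inv.
Proof.
  unfold gr_eq. intros x x' Hx.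
  replace (x'⁻¹⁻¹ ⋅ x⁻¹) with ((x'⁻¹)⁻¹ ⋅ (x'⁻¹ ⋅ x)⁻¹ ⋅ x'⁻¹) by group_simpl.
  apply filt_conj, filtV; [lia | lia | exact Hx].
Qed.

Lemma gr_eq_mulr_succ n x c : F (S n) c -> x ⋅ c ≡[n] x.
Proof. unfold gr_eq. now rewrite mulKg. Qed.

Lemma gr_eq_central n z g : 1 <= n -> F n z -> z ⋅ g ≡[n] g ⋅ z.
Proof.
  unfold gr_eq. intros Hn Hz.
  replace ((g ⋅ z)⁻¹ ⋅ (z ⋅ g)) with ⁅z⁻¹, g⁻¹⁆ by group_simpl.
  rewrite <- Nat.add_1_r. apply filt_commg; auto.
  - now apply filtV.
  - apply filtV, (filt_one _ _ _ _ HF). lia.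
Qed.

Lemma gr_commMg n m a b v :
  1 <= n -> 1 <= m -> F n a -> F n b -> F m v ->
  ⁅a ⋅ b, v⁆ ≡[n + m] ⁅a, v⁆ ⋅ ⁅b, v⁆.
Proof.
  intros Hn Hm Ha Hb Hv.
  replace ⁅a ⋅ b, v⁆ with (a ⋅ ⁅b, v⁆ ⋅ a⁻¹ ⋅ ⁅a, v⁆) by group_simpl.
  rewrite <- (gr_eq_central (n + m) ⁅b, v⁆ a), mulgK by (lia || now apply filt_commg).
  apply gr_eq_central; [lia | now apply filt_commg].
Qed.

Lemma gr_commgM n m u a b :
  1 <= n -> 1 <= m -> F n u -> F m a -> F m b ->
  ⁅u, a ⋅ b⁆ ≡[n + m] ⁅u, a⁆ ⋅ ⁅u, b⁆.
Proof.
  intros Hn Hm Hu Ha Hb.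
  replace ⁅u, a ⋅ b⁆ with (⁅u, a⁆ ⋅ (a ⋅ ⁅u, b⁆ ⋅ a⁻¹)) by group_simpl.
  rewrite <- (gr_eq_central (n + m) ⁅u, b⁆ a), mulgK by (lia || now apply filt_commg).
  reflexivity.
Qed.

Section FilteredRotaBaxter.

Context {R : G -> G}.
Hypothesis HR : is_filtered_RB mul inv F R.

Let R_mul := rb_identity _ _ _ _ HR.

Lemma filtR k x : 1 <= k -> F k x -> F k (R x).
Proof. apply (rb_filt _ _ _ _ HR). Qed.

#[local] Instance R_gr_eq_Proper n :
  Proper (gr_eq mul inv F n ==> gr_eq mul inv F n) R.
Proof.
  unfold gr_eq. intros x y Hxy.
  rewrite (R_ldiv R_mul). apply filtR, filt_conj; [lia | lia | exact Hxy].
Qed.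

Lemma R_gr_eq n x y : x ≡[n] y -> R x ≡[n] R y.
Proof. apply R_gr_eq_Proper. Qed.

Lemma R_gr_additive n x y :
  1 <= n -> F n x -> F n y -> R (x ⋅ y) ≡[n] R x ⋅ R y.
Proof.
  intros Hn Hx Hy.
  rewrite (R_mul_comm R_mul), (gr_eq_mulr_succ n (x ⋅ y)); [reflexivity |].
  apply (filt_antitone _ (n + n)); [lia | lia |].
  apply filt_commg; auto using filtV, filtR.
Qed.

Lemma R_gr_gpow n x k :
  1 <= n -> F n x -> R (gpow mul e x k) ≡[n] gpow mul e (R x) k.
Proof.
  intros Hn Hx. induction k as [|k IH]; simpl.
  - now rewrite (R_one R_mul).
  - now rewrite R_gr_additive, IH by auto using filt_gpow.
Qed.

Lemma R_gr_inv n x : 1 <= n -> F n x -> R x⁻¹ ≡[n] (R x)⁻¹.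
Proof.
  intros Hn Hx.
  rewrite <- (mulKg (R x) (R x⁻¹)), <- R_gr_additive, mulgV, (R_one R_mul), mulg1
    by auto using filtV.
  reflexivity.
Qed.

Lemma R_gr_zpow n x a :
  1 <= n -> F n x -> R (zpow mul inv e x a) ≡[n] zpow mul inv e (R x) a.
Proof.
  intros Hn Hx. destruct a as [|b|b]; simpl.
  - now rewrite (R_one R_mul).
  - now apply R_gr_gpow.
  - now rewrite R_gr_inv, R_gr_gpow by auto using filt_gpow.
Qed.

Lemma R_gr_Q_homogeneous n (a : Z) (b : positive) x y :
  1 <= n -> F n x -> F n y ->
  zpow mul inv e y (Zpos b) ≡[n] zpow mul inv e x a ->
  zpow mul inv e (R y) (Zpos b) ≡[n] zpow mul inv e (R x) a.
Proof.
  intros Hn Hx Hy Hyx.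
  now rewrite <- R_gr_zpow, <- R_gr_zpow, Hyx.
Qed.

Lemma R_gr_comm n m x y :
  1 <= n -> 1 <= m -> F n x -> F m y ->
  ⁅R x, R y⁆ ≡[n + m] R (⁅R x, y⁆ ⋅ ⁅x, R y⁆ ⋅ ⁅x, y⁆).
Proof.
  intros Hn Hm Hx Hy.
  assert (HRx : F n (R x)) by auto using filtR.
  assert (HRy : F m (R y)) by auto using filtR.
  rewrite (R_comm R_mul). apply R_gr_eq.
  rewrite (gr_commMg n m), (gr_commgM n m x), (gr_commgM n m (R x))
    by auto using filtM.
  rewrite <- mulgA, mulgK.
  assert (Hxy : F (n + m) ⁅x, y⁆) by now apply filt_commg.
  assert (HxRy : F (n + m) ⁅x, R y⁆) by now apply filt_commg.
  rewrite (gr_eq_central _ ⁅x, y⁆ ⁅x, R y⁆), (gr_eq_central _ (⁅x, R y⁆ ⋅ ⁅x, y⁆)), mulgA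
    by (lia || auto using filtM with arith).
  reflexivity.
Qed.

End FilteredRotaBaxter.

End Filtration.

End Group.

Theorem proposition5p13 (G : Type) (mul : G -> G -> G) (inv : G -> G) (e : G)
  (F : nat -> G -> Prop) (R : G -> G)
  (HG : is_group mul inv e)
  (HF : is_filtration mul inv e F)
  (HR : is_filtered_RB mul inv F R)
  (HQ : gr_uniquely_divisible mul inv e F) :
  grR_well_defined mul inv F R /\
  grR_additive mul inv F R /\
  grR_Q_homogeneous mul inv e F R /\
  grR_RB_identity mul inv F R.
Proof.
  split; [| split; [| split]].
  - intros n x y _ _ _. exact (R_gr_eq HG HF HR n x y).
  - exact (R_gr_additive HG HF HR).
  - exact (R_gr_Q_homogeneous HG HF HR).
  - exact (R_gr_comm HG HF HR).
Qed.
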